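(* Let $U$ be a finite ground set, $p$ a positive integer with $p\le |U|$, $\lambda\ge 0$, $d$ an $\alpha$-relaxed semi-metric distance on $U$ (for some $\alpha\ge 1$), and $f:2^U\to\mathbb{R}_{\ge 0}$ a non-negative monotone submodular set function. Consider the problem of finding $S\subseteq U$ with $|S|=p$ maximizing $\phi(S)=f(S)+\lambda\, d(S)$. Let $G$ be the set returned by the following greedy algorithm: start with $S=\emptyset$; while $|S|<p$, pick $u\in U\setminus S$ maximizing $\phi'_u(S)=\tfrac12\big(f(S\cup\{u\})-f(S)\big)+\lambda\sum_{v\in S}d(u,v)$ (ties broken arbitrarily) and set $S=S\cup\{u\}$. Then $$\phi(G)\;\ge\;\frac{1}{2\alpha}\,\phi(O),$$ where $O$ is an optimal solution, i.e. $\phi(O)=\max\{\phi(S): S\subseteq U,\ |S|=p\}$.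
   Context: An $\alpha$-relaxed semi-metric distance on $U$ (with $\alpha\ge 1$) is a function $d:U\times U\to\mathbb{R}_{\ge 0}$ with $d(u,v)=d(v,u)$, $d(u,u)=0$, satisfying $d(u,v)\le \alpha\,(d(v,w)+d(w,u))$ for all $u,v,w\in U$. For $S\subseteq U$, $d(S)=\sum_{\{u,v\}\subseteq S,\,u\ne v} d(u,v)$. A set function $f$ is monotone if $f(S)\le f(T)$ whenever $S\subseteq T$, and submodular if $f(S\cup\{u\})-f(S)\ge f(T\cup\{u\})-f(T)$ whenever $S\subseteq T$ and $u\notin T$. *)

From mathcomp Require Import all_boot all_order all_algebra.
Set Implicit Arguments. Unset Strict Implicit. Unset Printing Implicit Defensive.
Import Order.TTheory GRing.Theory Num.Theory.
Local Open Scope ring_scope.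

Section Defs.
Variables (R : realFieldType) (U : finType).

Definition relaxed_semimetric (alpha : R) (d : U -> U -> R) : Prop :=
  [/\ forall u v, 0 <= d u v,
      forall u v, d u v = d v u,
      forall u, d u u = 0 &
      forall u v w, d u v <= alpha * (d v w + d w u)].

(* d(S): sum over unordered pairs {u,v} of distinct elements of S
   (each pair counted once, via the enumeration order of U) *)
Definition dsum (d : U -> U -> R) (S : {set U}) : R :=
  \sum_(u in S) \sum_(v in S | (enum_rank u < enum_rank v)%N) d u v.

Definition monotone_set (f : {set U} -> R) : Prop :=
  forall S T : {set U}, S \subset T -> f S <= f T.

Definition submodular (f : {set U} -> R) : Prop :=
  forall (S T : {set U}) (u : U), S \subset T -> u \notin T ->
    f (u |: S) - f S >= f (u |: T) - f T.

Definition phi (f : {set U} -> R) (lam : R) (d : U -> U -> R) (S : {set U}) : R :=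
  f S + lam * dsum d S.

Definition gain (f : {set U} -> R) (lam : R) (d : U -> U -> R)
  (S : {set U}) (u : U) : R :=
  (f (u |: S) - f S) / 2 + lam * \sum_(v in S) d u v.

(* s is a possible run of the greedy algorithm (arbitrary tie-breaking):
   s lists the p picked elements in order; each pick x, made when the
   current set consists of the elements of prefix a, is not yet in the set
   and maximizes the gain over all elements not yet in the set. *)
Definition greedy_run (f : {set U} -> R) (lam : R) (d : U -> U -> R)
  (p : nat) (s : seq U) : Prop :=
  size s = p /\
  forall (a : seq U) (x : U) (b : seq U), s = a ++ x :: b ->
    x \notin a /\
    forall u, u \notin a ->
      gain f lam d [set y in a] u <= gain f lam d [set y in a] x.

End Defs.

(* Let G_i be the set of the first i greedy picks and g_i the gain of pick
   i + 1.  Since phi(G_{i+1}) - phi(G_i) = g_i + (f(G_{i+1}) - f(G_i))/2, the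
   value of the greedy set telescopes to f(∅) + sum_i g_i + (f(G) - f(∅))/2.
   At step i every element of A = O \ G_i was still available, so |A| g_i
   dominates their total gain, which by submodularity and monotonicity is at
   least (f(O) - f(G))/2 + lam d(A, G_i).  The relaxed triangle inequality,
   applied to the splits O = (O \ G_i) + (O ∩ G_i) and G_i = (G_i \ O) + (O ∩ G_i),
   gives |A| i d(O) <= alpha p (p - 1) d(A, G_i).  Summing over i yields
   alpha (f(O) - f(G)) + lam d(O) <= 2 alpha sum_i g_i, and the bound follows
   from alpha >= 1 and f >= 0. *)

From mathcomp Require Import all_boot all_order all_algebra.
From mathcomp Require Import ring lra zify.
Import Order.TTheory GRing.Theory Num.Theory.
Set Implicit Arguments.
Unset Strict Implicit.
Unset Printing Implicit Defensive.
Local Open Scope ring_scope.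

(* With A = O \ G, B = G \ O, C = O ∩ G of sizes a, b, c, the numbers X, Y are
   the cross sums d(A, B), d(A, C) and DA, DC the ordered-pair sums inside A
   and C; the last four hypotheses are instances of [dcross_self_le_dcross]. *)
Lemma split_pairs_arith (R : realFieldType) (a b c alpha X Y DA DC : R) :
  1 <= a -> 0 <= b -> 0 <= c -> b + 1 <= a -> 1 <= alpha ->
  0 <= X -> 0 <= Y -> 0 <= DA -> 0 <= DC ->
  b * DA <= 2 * alpha * (a - 1) * X ->
  c * DA <= 2 * alpha * (a - 1) * Y ->
  a * DC <= 2 * alpha * (c - 1) * Y ->
  a * DA <= 2 * alpha * (a - 1) * DA ->
  a * (b + c) * (DA + DC + 2 * Y) <= 2 * alpha * (a + c) * (a + c - 1) * (X + Y).
Proof.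
move=> a1 b0 c0 ba al1 X0 Y0 DA0 DC0 hX hY hC hA.
have [a_eq1|a_neq1] := eqVneq a 1.
  subst a.
  have b00 : b = 0 by lra.
  have DA00 : DA = 0 by rewrite subrr mulr0 mul0r mul1r in hA; lra.
  subst b DA; rewrite mul1r in hC.
  have : c * (DC + 2 * Y) <= c * (2 * alpha * (c - 1) * Y + 2 * Y) by apply: ler_wpM2l; lra.
  have : 0 <= c * (2 * alpha * (1 + c) * X + (4 * alpha - 2) * Y).
    by apply: mulr_ge0 => //; apply: addr_ge0; apply: mulr_ge0; nra.
  lra.
have a_gt1 : 1 < a by rewrite lt_neqAle eq_sym a_neq1.
set p := a + c; set i := b + c.
set eX := 2 * alpha * (a - 1) * X - b * DA.
set eY := 2 * alpha * (a - 1) * Y - c * DA.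
set eC := 2 * alpha * (c - 1) * Y - a * DC.
(* (a - 1) times the slack of the goal is a nonnegative combination of the
   slacks of the hypotheses. *)
have cert : (a - 1) * (2 * alpha * p * (p - 1) * (X + Y) - a * i * (DA + DC + 2 * Y)) =
    p * (p - 1) * eX + (p - 1) * (p - i) * eY + (a - 1) * i * eC
  + 2 * (a - 1) * i * a * (alpha - 1) * Y + a * i * c * DA.
  by rewrite /eX /eY /eC /p /i; ring.
suff : 0 <= (a - 1) * (2 * alpha * p * (p - 1) * (X + Y) - a * i * (DA + DC + 2 * Y)).
  by rewrite pmulr_rge0 ?subr_gt0 // subr_ge0.
have [eX0 eY0 eC0] : [/\ 0 <= eX, 0 <= eY & 0 <= eC] by rewrite !subr_ge0.
rewrite cert; repeat apply: addr_ge0; repeat apply: mulr_ge0; rewrite /p /i; lra.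
Qed.

Section CrossDistances.
Variables (R : realFieldType) (U : finType) (d : U -> U -> R) (alpha : R).
Hypothesis d_ge0 : forall u v, 0 <= d u v.
Hypothesis d_sym : forall u v, d u v = d v u.
Hypothesis d_refl : forall u, d u u = 0.
Hypothesis d_tri : forall u v w, d u v <= alpha * (d v w + d w u).

Definition dcross (X Y : {set U}) : R := \sum_(u in X) \sum_(v in Y) d u v.

Lemma dcross_ge0 X Y : 0 <= dcross X Y.
Proof. by apply: sumr_ge0 => u _; apply: sumr_ge0. Qed.

Lemma dcrossC X Y : dcross X Y = dcross Y X.
Proof.
by rewrite /dcross exchange_big; apply: eq_bigr => u _; apply: eq_bigr.
Qed.

Lemma dcross_setIDr X Y Z : dcross X Y = dcross X (Y :&: Z) + dcross X (Y :\: Z).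
Proof. by rewrite /dcross -big_split; apply: eq_bigr => u _; apply: big_setID. Qed.

Lemma dcross_setIDl X Y Z : dcross X Y = dcross (X :&: Z) Y + dcross (X :\: Z) Y.
Proof. by rewrite /dcross -big_setID. Qed.

Lemma dsum_set1 u : dsum d [set u] = 0.
Proof.
rewrite /dsum big_set1 big_pred0 // => v; rewrite inE.
by case: (eqVneq v u) => [->|]; rewrite ?ltnn ?andbF.
Qed.

Lemma dsum_dcross S : 2 * dsum d S = dcross S S.
Proof.
pose below u v := if (enum_rank u < enum_rank v)%N then d u v else 0.
have split_d u v : d u v = below u v + below v u.
  rewrite /below; case: ltngtP => [_|_|/val_inj/enum_rank_inj ->].
  - by rewrite addr0.
  - by rewrite add0r d_sym.
  - by rewrite d_refl addr0.
have -> : dsum d S = \sum_(u in S) \sum_(v in S) below u v.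
  by apply: eq_bigr => u _; rewrite big_mkcondr.
rewrite /dcross (eq_bigr _ (fun u _ => eq_bigr _ (fun v _ => split_d u v))).
under eq_bigr do rewrite big_split.
by rewrite big_split /= [X in _ + X]exchange_big mulr2n mulrDl mul1r.
Qed.

Lemma dsumU1 (S : {set U}) x :
  x \notin S -> dsum d (x |: S) = dsum d S + \sum_(v in S) d x v.
Proof.
move=> xS; apply: (@mulfI _ 2); first by rewrite pnatr_eq0.
rewrite mulrDr !dsum_dcross /dcross !big_setU1 //= d_refl add0r.
under [X in _ + X]eq_bigr do rewrite big_setU1 //=.
rewrite big_split /= (eq_bigr (d x) (fun v _ => d_sym v x)).
ring.
Qed.

Lemma dcross_self_le_dist_sum X y :
  dcross X X <= 2 * alpha * (#|X|%:R - 1) * \sum_(u in X) d u y.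
Proof.
set c := \sum_(u in X) d u y.
have row u : u \in X ->
    \sum_(v in X) d u v <= alpha * (c - d u y) + alpha * (#|X|%:R - 1) * d u y.
  move=> uX; rewrite (big_setD1 u uX) /= d_refl add0r /c (big_setD1 u uX) /= addrC addrK.
  have -> : #|X|%:R - 1 = #|X :\ u|%:R :> R by rewrite (cardsD1 u X) uX add1n -natr1 addrK.
  apply: le_trans (ler_sum _ (fun v _ => d_tri u v y)) _.
  by rewrite -mulr_sumr big_split /= sumr_const d_sym mulrDr -[d u y *+ _]mulr_natl mulrA.
rewrite /dcross; apply: le_trans (ler_sum _ row) _.
rewrite big_split /= -!mulr_sumr sumrB sumr_const -/c -mulr_natl; lra.
Qed.

Lemma dcross_self_le_dcross (X Y : {set U}) :
  #|Y|%:R * dcross X X <= 2 * alpha * (#|X|%:R - 1) * dcross X Y.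
Proof.
have -> : dcross X Y = \sum_(y in Y) \sum_(u in X) d u y by apply: exchange_big.
rewrite mulr_natl -sumr_const mulr_sumr.
by apply: ler_sum => y _; apply: dcross_self_le_dist_sum.
Qed.

Lemma dcross_self_setID X Z :
  dcross X X = dcross (X :&: Z) (X :&: Z) + dcross (X :\: Z) (X :\: Z)
               + 2 * dcross (X :\: Z) (X :&: Z).
Proof.
rewrite {1}(dcross_setIDl X X Z) !(dcross_setIDr _ X Z).
by rewrite (dcrossC (X :&: Z) (X :\: Z)); ring.
Qed.

Lemma dcross_le_dcross_setD (O G : {set U}) : 1 <= alpha -> (#|G| < #|O|)%N ->
  #|O :\: G|%:R * #|G|%:R * dcross O O
    <= 2 * alpha * #|O|%:R * (#|O|%:R - 1) * dcross (O :\: G) G.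
Proof.
move=> alpha_ge1 ltGO.
set A := O :\: G; set B := G :\: O; set C := O :&: G.
have cardO : (#|A| + #|C| = #|O|)%N by rewrite addnC cardsID.
have cardG : (#|B| + #|C| = #|G|)%N by rewrite /C setIC addnC cardsID.
rewrite (dcross_self_setID O G) -/A -/C (dcross_setIDr A G O) (setIC G O) -/C -/B.
rewrite -cardO -cardG !natrD [dcross C C + _]addrC [dcross A C + _]addrC.
apply: split_pairs_arith; rewrite ?ler0n ?dcross_ge0 ?dcross_self_le_dcross //.
- by rewrite ler1n; lia.
- by rewrite natr1 ler_nat; lia.
- by rewrite (dcrossC A C) dcross_self_le_dcross.
Qed.

End CrossDistances.

Section Marginals.
Variables (R : realFieldType) (U : finType) (f : {set U} -> R).
Hypotheses (f_mono : monotone_set f) (f_submod : submodular f).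

Lemma submodular_le_sum_marginals (G A : {set U}) :
  f (G :|: A) - f G <= \sum_(u in A) (f (u |: G) - f G).
Proof.
rewrite -big_enum -[A in G :|: A]set_enum.
elim: (enum A) => [|x r IH]; first by rewrite set_nil setU0 big_nil subrr.
rewrite set_cons setUCA big_cons; set T := G :|: [set:: r].
have -> : f (x |: T) - f G = (f (x |: T) - f T) + (f T - f G) by ring.
apply: lerD IH; have [xT|xT] := boolP (x \in T).
  by rewrite (setUidPr _) ?sub1set // subrr subr_ge0 f_mono // subsetUr.
by apply: f_submod; rewrite ?subsetUl.
Qed.

Lemma gain_ge0 (lam : R) (d : U -> U -> R) S u :
  0 <= lam -> (forall u v, 0 <= d u v) -> 0 <= gain f lam d S u.
Proof.
move=> lam_ge0 d_ge0; apply: addr_ge0.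
  by rewrite divr_ge0 // subr_ge0 f_mono // subsetUr.
by rewrite mulr_ge0 // sumr_ge0.
Qed.

End Marginals.

Lemma triangular_sumr (R : realFieldType) (n : nat) :
  2 * \sum_(0 <= i < n) (i%:R : R) = n%:R * (n%:R - 1).
Proof.
elim: n => [|n IH]; first by rewrite big_geq // mulr0 mul0r.
by rewrite big_nat_recr //= mulrDr IH -natr1; ring.
Qed.

Section PrefixSets.
Variable U : finType.

Definition prefix_set (s : seq U) (i : nat) : {set U} := [set y in take i s].

Lemma prefix_set0 s : prefix_set s 0 = set0.
Proof. by rewrite /prefix_set take0 set_nil. Qed.

Lemma prefix_set_size s : prefix_set s (size s) = [set y in s].
Proof. by rewrite /prefix_set take_size. Qed.

Lemma prefix_set_sub s i : prefix_set s i \subset [set y in s].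
Proof. by apply/subsetP => y; rewrite !inE; apply: mem_take. Qed.

Lemma prefix_setS x0 s i :
  (i < size s)%N -> prefix_set s i.+1 = nth x0 s i |: prefix_set s i.
Proof.
by move=> lt_is; apply/setP => y; rewrite !inE (take_nth x0 lt_is) mem_rcons inE.
Qed.

End PrefixSets.

Section GreedyRun.
Variables (R : realFieldType) (U : finType) (f : {set U} -> R) (lam : R).
Variables (d : U -> U -> R) (p : nat) (s : seq U) (x0 : U).
Hypothesis run : greedy_run f lam d p s.

Local Notation G := (prefix_set s).
Local Notation x := (nth x0 s).
Local Notation g i := (gain f lam d (G i) (x i)).

Lemma greedy_pick i : (i < p)%N ->
  x i \notin G i /\ forall u, u \notin G i -> gain f lam d (G i) u <= g i.
Proof.
case: run => size_s pick lt_ip.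
have [] := pick (take i s) (x i) (drop i.+1 s).
  by rewrite -drop_nth ?size_s // cat_take_drop.
by move=> notin maxi; split=> [|u]; rewrite inE //; apply: maxi.
Qed.

Lemma prefix_set_greedyS i : (i < p)%N -> G i.+1 = x i |: G i.
Proof. by case: run => size_s _ lt_ip; rewrite (prefix_setS x0) ?size_s. Qed.

Lemma card_prefix_set i : (i <= p)%N -> #|G i| = i.
Proof.
elim: i => [|i IH] le_ip; first by rewrite prefix_set0 cards0.
by rewrite prefix_set_greedyS // cardsU1 (greedy_pick le_ip).1 IH // ltnW.
Qed.

Lemma prefix_set_run : G p = [set y in s].
Proof. by case: run => <- _; apply: prefix_set_size. Qed.

Hypotheses (d_sym : forall u v, d u v = d v u) (d_refl : forall u, d u u = 0).

Lemma phi_greedy : phi f lam d [set y in s]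
  = f set0 + \sum_(0 <= i < p) g i + (f [set y in s] - f set0) / 2.
Proof.
have step i : (0 <= i < p)%N -> phi f lam d (G i.+1) - phi f lam d (G i)
    = g i + (f (G i.+1) - f (G i)) / 2.
  case/andP=> _ lt_ip; have [notin _] := greedy_pick lt_ip.
  by rewrite /phi /gain prefix_set_greedyS // dsumU1 //; field.
have := telescope_sumr (fun i => phi f lam d (G i)) (leq0n p).
rewrite (eq_big_nat _ _ step) big_split /= -mulr_suml.
rewrite (telescope_sumr (fun i => f (G i))) // prefix_set_run prefix_set0.
by rewrite {2}/phi /dsum big_set0 mulr0 addr0; lra.
Qed.

Variables (alpha : R) (O : {set U}).
Hypotheses (d_ge0 : forall u v, 0 <= d u v)
  (d_tri : forall u v w, d u v <= alpha * (d v w + d w u)).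
Hypotheses (alpha_ge1 : 1 <= alpha) (lam_ge0 : 0 <= lam).
Hypotheses (f_mono : monotone_set f) (f_submod : submodular f).
Hypothesis card_O : #|O| = p.

Local Notation F := (Num.max 0 (f O - f [set y in s])).

Lemma greedy_step_gain i : (i < p)%N ->
  F / 2 + lam * dcross d (O :\: G i) (G i) <= #|O :\: G i|%:R * g i.
Proof.
move=> lt_ip; set A := O :\: G i.
have sum_le : \sum_(u in A) gain f lam d (G i) u <= #|A|%:R * g i.
  rewrite mulr_natl -sumr_const; apply: ler_sum => u.
  by rewrite inE => /andP[uG _]; apply: (greedy_pick lt_ip).2.
apply: le_trans sum_le; rewrite /gain big_split /= -mulr_suml -mulr_sumr.
rewrite lerD2r ler_pM2r ?invr_gt0 ?ltr0n // ge_max; apply/andP; split.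
  by apply: sumr_ge0 => u _; rewrite subr_ge0 f_mono // subsetUr.
apply: le_trans (submodular_le_sum_marginals f_mono f_submod (G i) A).
have : f O <= f (G i :|: A).
  by apply: f_mono; apply/subsetP => y yO; rewrite !inE yO andbT orbN.
have : f (G i) <= f [set y in s] by apply/f_mono/prefix_set_sub.
lra.
Qed.

Lemma greedy_step_bound i : (i < p)%N ->
  alpha * (p%:R - 1) * F + lam * i%:R * dcross d O O
    <= 2 * alpha * p%:R * (p%:R - 1) * g i.
Proof.
move=> lt_ip; set A := O :\: G i.
have card_G : #|G i| = i by rewrite card_prefix_set // ltnW.
have gain_bound := greedy_step_gain lt_ip.
have lt_GO : (#|G i| < #|O|)%N by rewrite card_G card_O.
have := dcross_le_dcross_setD d_ge0 d_sym d_refl d_tri alpha_ge1 lt_GO.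
rewrite card_G card_O -/A => dist_bound.
have card_A : (1 <= #|A| <= p)%N.
  have := cardsID (G i) O; have := subset_leq_card (subsetIr O (G i)).
  by rewrite -/A card_G card_O; lia.
have g_ge0 : 0 <= g i by apply: gain_ge0.
have F_ge0 : 0 <= F by rewrite le_max lexx.
have a_ge1 : 1 <= #|A|%:R :> R by rewrite ler1n; case/andP: card_A.
have a_lep : #|A|%:R <= p%:R :> R by rewrite ler_nat; case/andP: card_A.
have p_ge1 : 1 <= p%:R :> R by apply: le_trans a_lep.
have alpha_ge0 : 0 <= alpha := le_trans ler01 alpha_ge1.
have pB1_ge0 : 0 <= p%:R - 1 :> R by rewrite subr_ge0.
have K_ge0 : 0 <= 2 * alpha * p%:R * (p%:R - 1) by rewrite !mulr_ge0.
rewrite -(ler_pM2l (lt_le_trans ltr01 a_ge1)).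
have h1 : 2 * alpha * p%:R * (p%:R - 1) * (F / 2 + lam * dcross d A (G i))
    <= 2 * alpha * p%:R * (p%:R - 1) * (#|A|%:R * g i).
  exact: ler_wpM2l.
have h2 : lam * (#|A|%:R * i%:R * dcross d O O)
    <= lam * (2 * alpha * p%:R * (p%:R - 1) * dcross d A (G i)) by apply: ler_wpM2l.
have h3 : #|A|%:R * (alpha * (p%:R - 1) * F) <= p%:R * (alpha * (p%:R - 1) * F).
  by rewrite ler_wpM2r ?mulr_ge0.
lra.
Qed.

Lemma greedy_gains_bound : (0 < p)%N ->
  alpha * (f O - f [set y in s]) + lam * dsum d O <= 2 * alpha * \sum_(0 <= i < p) g i.
Proof.
move=> p_gt0.
have alpha_ge0 : 0 <= alpha := le_trans ler01 alpha_ge1.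
have F_ge : alpha * (f O - f [set y in s]) <= alpha * F by rewrite ler_wpM2l ?le_max ?lexx ?orbT.
apply: le_trans (_ : alpha * F + lam * dsum d O <= _); first by rewrite lerD2r.
have [p_eq1|p_neq1] := eqVneq p 1.
  have [o O_eq] : exists o, O = [set o] by apply/cards1P; rewrite card_O p_eq1.
  have dsum_O : dsum d O = 0 by rewrite O_eq dsum_set1.
  have := greedy_step_gain p_gt0.
  rewrite p_eq1 big_nat1 prefix_set0 setD0 card_O p_eq1 mul1r dsum_O mulr0 addr0.
  move=> step; rewrite [2 * _]mulrC -mulrA; apply: ler_wpM2l => //.
  have : 0 <= lam * dcross d O set0 by rewrite mulr_ge0 ?dcross_ge0.
  lra.
have p_ge2 : (1 < p)%N by rewrite ltn_neqAle eq_sym p_neq1.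
have step_sum : \sum_(0 <= i < p) (alpha * (p%:R - 1) * F + lam * i%:R * dcross d O O)
    <= \sum_(0 <= i < p) (2 * alpha * p%:R * (p%:R - 1) * g i).
  by apply: ler_sum_nat => i /andP[_ lt_ip]; apply: greedy_step_bound.
have sum_i : \sum_(0 <= i < p) (i%:R : R) = p%:R * (p%:R - 1) / 2.
  by rewrite -triangular_sumr; field.
rewrite big_split /= sumr_const_nat subn0 -[_ *+ p]mulr_natl in step_sum.
rewrite -mulr_suml -mulr_sumr sum_i -mulr_sumr -(dsum_dcross d_sym d_refl) in step_sum.
have pp_gt0 : 0 < p%:R * (p%:R - 1) :> R.
  by rewrite mulr_gt0 ?subr_gt0 ?ltr0n ?ltr1n // ltnW.
rewrite -(ler_pM2l pp_gt0); lra.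
Qed.

End GreedyRun.

Theorem theorem1 (R : realFieldType) (U : finType) (p : nat)
  (lam alpha : R) (d : U -> U -> R) (f : {set U} -> R)
  (s : seq U) (O : {set U}) :
  (0 < p)%N -> (p <= #|U|)%N ->
  0 <= lam -> 1 <= alpha ->
  relaxed_semimetric alpha d ->
  (forall S, 0 <= f S) -> monotone_set f -> submodular f ->
  greedy_run f lam d p s ->
  #|O| = p ->
  (forall S : {set U}, #|S| = p -> phi f lam d S <= phi f lam d O) ->
  phi f lam d [set y in s] >= phi f lam d O / (2 * alpha).
Proof.
move=> p_gt0 _ lam_ge0 alpha_ge1 [d_ge0 d_sym d_refl d_tri] f_ge0 f_mono f_submod run card_O _.
have [x0 _] : exists x0, x0 \in O by apply/set0Pn; rewrite -card_gt0 card_O.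
have phi_G := phi_greedy x0 run d_sym d_refl.
have gains := greedy_gains_bound x0 run d_sym d_refl d_ge0 d_tri alpha_ge1 lam_ge0
  f_mono f_submod card_O p_gt0.
have alpha_gt0 : 0 < alpha := lt_le_trans ltr01 alpha_ge1.
have := mulr_ge0 (ltW alpha_gt0) (f_ge0 set0).
have : 0 <= (alpha - 1) * f O by rewrite mulr_ge0 ?subr_ge0.
rewrite ler_pdivrMr ?mulr_gt0 ?ltr0n // phi_G {1}/phi.
lra.
Qed.
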